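(* Let $ABC$ be a triangle with incenter $I$ and orthocenter $H$, and let $H_A, H_B, H_C$ be the orthocenters of the triangles $BIC$, $CIA$, $AIB$ respectively. Let $O_a, O_b, O_c$ be the circumcenters of the triangles $H_ABC$, $H_BCA$, $H_CBA$ respectively (the triangle $O_aO_bO_c$ is the Fuhrmann triangle), and let $O_A, O_B, O_C$ be the circumcenters of the triangles $AH_BH_C$, $BH_CH_A$, $CH_AH_B$ respectively (the triangle $O_AO_BO_C$ is called the Anti-Fuhrmann triangle). Then the triangle $O_AO_BO_C$ is the image of the triangle $O_aO_bO_c$ under the point reflection in the midpoint of $HI$, with $O_a \mapsto O_A$, $O_b\mapsto O_B$, $O_c\mapsto O_C$. *)

From HB Require Import structures.
From mathcomp Require Import all_boot all_order all_algebra.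
From mathcomp Require Import reals.
Set Implicit Arguments. Unset Strict Implicit. Unset Printing Implicit Defensive.
Import Order.TTheory GRing.Theory Num.Theory.
Local Open Scope ring_scope.

Definition point (R : realType) := (R * R)%type.

Section Geo.
Variable R : realType.
Implicit Types P Q A B C : point R.

Definition vsub P Q : point R := (P.1 - Q.1, P.2 - Q.2).
Definition dot P Q : R := P.1 * Q.1 + P.2 * Q.2.
Definition cross P Q : R := P.1 * Q.2 - P.2 * Q.1.
Definition sqdist P Q : R := dot (vsub P Q) (vsub P Q).

Definition noncollinear A B C : Prop := cross (vsub B A) (vsub C A) != 0.

Definition strictly_inside P A B C : Prop :=
  let s1 := cross (vsub B A) (vsub P A) in
  let s2 := cross (vsub C B) (vsub P B) in
  let s3 := cross (vsub A C) (vsub P C) in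
  (0 < s1 /\ 0 < s2 /\ 0 < s3) \/ (s1 < 0 /\ s2 < 0 /\ s3 < 0).

Definition sqdist_line P A B : R :=
  (cross (vsub B A) (vsub P A)) ^+ 2 / sqdist A B.

Definition is_incenter I A B C : Prop :=
  strictly_inside I A B C /\
  sqdist_line I B C = sqdist_line I C A /\
  sqdist_line I C A = sqdist_line I A B.

Definition is_orthocenter H A B C : Prop :=
  dot (vsub H A) (vsub C B) = 0 /\
  dot (vsub H B) (vsub A C) = 0 /\
  dot (vsub H C) (vsub B A) = 0.

Definition is_circumcenter O A B C : Prop :=
  sqdist O A = sqdist O B /\ sqdist O B = sqdist O C.

Definition midpoint P Q : point R := ((P.1 + Q.1) / 2%:R, (P.2 + Q.2) / 2%:R).

Definition point_reflection M P : point R := (2%:R * M.1 - P.1, 2%:R * M.2 - P.2).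

End Geo.

From HB Require Import structures.
From mathcomp Require Import all_boot all_order all_algebra.
From mathcomp Require Import reals.
From mathcomp Require Import ring lra.
Set Implicit Arguments. Unset Strict Implicit. Unset Printing Implicit Defensive.
Import Order.TTheory GRing.Theory Num.Theory.
Local Open Scope ring_scope.

(* Put the circumcircle of ABC on the unit circle and write A, B, C as a^2, b^2, c^2
   with a, b, c on the unit circle.  For the right choice of the signs of a, b, c the
   incenter is I = -(ab + bc + ca), the orthocenter is H = a^2 + b^2 + c^2, and
   H_A = b^2 + c^2 + bc - ca - ab, O_a = b^2 + c^2 + bc, O_A = a^2 - ab - ca - 2bc
   (cyclically for the others), so that O_a + O_A = H + I.  These points are
   recognised by the uniqueness of orthocenters and circumcenters of nondegenerate
   triangles.  Writing a = p / conj p keeps every identity rational in the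
   coordinates of p, so that each one is a single [field] computation. *)

Section ComplexOps.
Variable R : realType.
Implicit Types (t : R) (u v : point R).

Definition cadd u v : point R := (u.1 + v.1, u.2 + v.2).
Definition copp u : point R := (- u.1, - u.2).
Definition cmul u v : point R := (u.1 * v.1 - u.2 * v.2, u.1 * v.2 + u.2 * v.1).
Definition cscale t u : point R := (t * u.1, t * u.2).

End ComplexOps.

Declare Scope cplx_scope.
Delimit Scope cplx_scope with C.
Notation "u + v" := (cadd u v) : cplx_scope.
Notation "- u" := (copp u) : cplx_scope.
Notation "u - v" := (vsub u v) : cplx_scope.
Notation "u * v" := (cmul u v) : cplx_scope.
Notation "t *: u" := (cscale t u) : cplx_scope.

Section LinearCombination.
Variable R : pzRingType.

Lemma eq_lincomb (x y x1 y1 t : R) : x1 = y1 -> x - y = t * (x1 - y1) -> x = y.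
Proof. by move=> ->; rewrite subrr mulr0 => /subr0_eq. Qed.

Lemma eq_lincomb2 (x y x1 y1 x2 y2 t1 t2 : R) : x1 = y1 -> x2 = y2 ->
  x - y = t1 * (x1 - y1) + t2 * (x2 - y2) -> x = y.
Proof. by move=> -> ->; rewrite !subrr !mulr0 addr0 => /subr0_eq. Qed.

End LinearCombination.

Section Signs.
Variable R : realFieldType.
Implicit Types (x y z : R).

Definition same_sign x y z : Prop :=
  (0 < x /\ 0 < y /\ 0 < z) \/ (x < 0 /\ y < 0 /\ z < 0).

Lemma same_sign_cycle x y z : same_sign x y z -> same_sign y z x.
Proof. by case=> [[? [? ?]]|[? [? ?]]]; [left|right]. Qed.

Lemma same_sign_mul_gt0 x y z : same_sign x y z -> [/\ 0 < x * y, 0 < y * z & 0 < z * x].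
Proof. by case=> [[? [? ?]]|[? [? ?]]]; split; nra. Qed.

Lemma same_sign_neq0 x y z : same_sign x y z -> [/\ x != 0, y != 0 & z != 0].
Proof. by case=> [[? [? ?]]|[? [? ?]]]; split; apply/eqP=> ?; lra. Qed.

Lemma same_sign_sum_neq0 x y z : same_sign x y z -> x + y + z != 0.
Proof. by case=> [[? [? ?]]|[? [? ?]]]; apply/eqP=> ?; lra. Qed.

Lemma eq_sqr_mul_gt0 x y : 0 < x * y -> x ^+ 2 = y ^+ 2 -> x = y.
Proof.
move=> xy /eqP; rewrite eqf_sqr => /orP[/eqP //| /eqP exy].
by move: xy; rewrite exy mulNr oppr_gt0 -expr2 ltNge sqr_ge0.
Qed.

End Signs.

Section Plane.
Variable R : realType.
Implicit Types (x y z t l : R) (u v P Q X Y Z A B C O : point R).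

Lemma dot_self_eq0 u : dot u u = 0 -> u = (0, 0).
Proof.
case: u => u1 u2; rewrite /dot /= => /eqP.
by rewrite -!expr2 paddr_eq0 ?sqr_ge0 // !sqrf_eq0 => /andP[/eqP -> /eqP ->].
Qed.

Lemma sqdist_eq0 P Q : sqdist P Q = 0 -> P = Q.
Proof.
case: P Q => [x1 x2] [y1 y2] /dot_self_eq0 [/eqP + /eqP].
by rewrite !subr_eq0 => /eqP -> /eqP ->.
Qed.

Lemma cross_neq0_add u v : cross u v != 0 -> dot (u + v)%C (u + v)%C != 0.
Proof.
case: u v => [u1 u2] [v1 v2]; apply: contra_neq => /dot_self_eq0 [= e1 e2].
by apply: (eq_lincomb2 (t1 := - u2) (t2 := u1) e1 e2); rewrite /cross /=; ring.
Qed.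

Lemma cross_neq0_sub u v : cross u v != 0 -> dot (v - u)%C (v - u)%C != 0.
Proof.
case: u v => [u1 u2] [v1 v2]; apply: contra_neq => /dot_self_eq0 [= e1 e2].
by apply: (eq_lincomb2 (t1 := - u2) (t2 := u1) e1 e2); rewrite /cross /=; ring.
Qed.

Lemma crossNl u v : cross (- u)%C v = - cross u v.
Proof. by rewrite /cross /=; ring. Qed.

Lemma crossNr u v : cross u (- v)%C = - cross u v.
Proof. by rewrite /cross /=; ring. Qed.

Lemma cmulNN u : (- u * - u)%C = (u * u)%C.
Proof. by rewrite /cmul /=; congr (_, _); ring. Qed.

Lemma cscale_inj t : t != 0 -> injective (cscale t).
Proof.
move=> t0 [x1 x2] [y1 y2] [/(mulfI t0) e1 /(mulfI t0) e2].
by rewrite e1 e2.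
Qed.

Lemma noncollinear_neq A B C : noncollinear A B C -> A <> B.
Proof. by rewrite /noncollinear => + eAB; rewrite eAB /cross /vsub /= !subrr !mul0r subrr eqxx. Qed.

Lemma noncollinear_cycle A B C : noncollinear A B C -> noncollinear B C A.
Proof.
rewrite /noncollinear; suff -> : cross (vsub C B) (vsub A B) = cross (vsub B A) (vsub C A) by [].
by rewrite /cross /vsub /=; ring.
Qed.

Lemma inside_noncollinear P A B C : strictly_inside P A B C ->
  [/\ noncollinear B P C, noncollinear C P A & noncollinear A P B].
Proof.
rewrite /strictly_inside /noncollinear /cross /vsub /= => ins.
by split; apply/eqP => ?; case: ins => [[? [? ?]]|[? [? ?]]]; lra.
Qed.

Lemma eq_of_dot_vsub P Q u v : cross u v != 0 ->
  dot (vsub P Q) u = 0 -> dot (vsub P Q) v = 0 -> P = Q.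
Proof.
case: P Q u v => [x1 x2] [y1 y2] [u1 u2] [v1 v2].
rewrite /cross /dot /vsub /= => nz eu ev.
have e1 : x1 = y1.
  apply: (mulIf nz); apply: (eq_lincomb2 (t1 := v2) (t2 := - u2) eu ev); ring.
have e2 : x2 = y2.
  apply: (mulIf nz); apply: (eq_lincomb2 (t1 := - v1) (t2 := u1) eu ev); ring.
by rewrite e1 e2.
Qed.

Lemma orthocenter_uniq H1 H2 X Y Z : noncollinear X Y Z ->
  is_orthocenter H1 X Y Z -> is_orthocenter H2 X Y Z -> H1 = H2.
Proof.
move=> nXYZ [e1 [e2 _]] [f1 [f2 _]].
apply: (eq_of_dot_vsub (u := vsub Z Y) (v := vsub X Z)).
- suff -> : cross (vsub Z Y) (vsub X Z) = cross (vsub Y X) (vsub Z X) by [].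
  by rewrite /cross /vsub /=; ring.
- by apply: (eq_lincomb2 (t1 := 1) (t2 := -1) e1 f1); rewrite /dot /vsub /=; ring.
- by apply: (eq_lincomb2 (t1 := 1) (t2 := -1) e2 f2); rewrite /dot /vsub /=; ring.
Qed.

Lemma circumcenter_uniq O1 O2 X Y Z : noncollinear X Y Z ->
  is_circumcenter O1 X Y Z -> is_circumcenter O2 X Y Z -> O1 = O2.
Proof.
move=> nXYZ [e1 e2] [f1 f2].
apply: (eq_of_dot_vsub (u := vsub Y X) (v := vsub Z X)) => //.
- apply: (eq_lincomb2 (t1 := 2^-1) (t2 := - 2^-1) e1 f1).
  by rewrite /sqdist /dot /vsub /=; field.
- apply: (eq_lincomb2 (t1 := 2^-1) (t2 := - 2^-1) (etrans e1 e2) (etrans f1 f2)).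
  by rewrite /sqdist /dot /vsub /=; field.
Qed.

Lemma is_circumcenter_swap O X Y Z :
  is_circumcenter O X Y Z -> is_circumcenter O X Z Y.
Proof. by move=> [e1 e2]; split; [rewrite e1 | rewrite e2]. Qed.

Lemma circumcenter_exists A B C : noncollinear A B C ->
  exists O, is_circumcenter O A B C.
Proof.
case: A B C => [a1 a2] [b1 b2] [c1 c2]; rewrite /noncollinear /cross /vsub /= => nz.
pose d := 2 * ((b1 - a1) * (c2 - a2) - (b2 - a2) * (c1 - a1)).
pose nb := (b1 - a1) ^+ 2 + (b2 - a2) ^+ 2.
pose nc := (c1 - a1) ^+ 2 + (c2 - a2) ^+ 2.
exists (a1 + (nb * (c2 - a2) - nc * (b2 - a2)) / d,
        a2 + (nc * (b1 - a1) - nb * (c1 - a1)) / d).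
by rewrite /is_circumcenter /sqdist /dot /vsub /d /nb /nc /=; split; field.
Qed.

Definition wsum x y z A B C : point R :=
  (x * A.1 + y * B.1 + z * C.1, x * A.2 + y * B.2 + z * C.2).

(* Barycentric coordinates are ratios of signed areas. *)
Lemma cross_barycentric X Y Z T :
  ((cross (vsub Y X) (vsub T X) + cross (vsub Z Y) (vsub T Y) + cross (vsub X Z) (vsub T Z))
     *: T)%C =
  wsum (cross (vsub Z Y) (vsub T Y)) (cross (vsub X Z) (vsub T Z)) (cross (vsub Y X) (vsub T X))
    X Y Z.
Proof. by rewrite /cscale /wsum /cross /vsub /=; congr (_, _); ring. Qed.

Lemma incenter_weights I A B C l x y z : l != 0 -> same_sign x y z ->
  sqdist B C = l * x ^+ 2 -> sqdist C A = l * y ^+ 2 -> sqdist A B = l * z ^+ 2 ->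
  is_incenter I A B C -> ((x + y + z) *: I)%C = wsum x y z A B C.
Proof.
move=> l0 sxyz eBC eCA eAB [ins [e23 e31]].
have := cross_barycentric A B C I.
move: ins e23 e31; rewrite /strictly_inside /sqdist_line eBC eCA eAB /=.
set s1 := cross (vsub B A) (vsub I A).
set s2 := cross (vsub C B) (vsub I B).
set s3 := cross (vsub A C) (vsub I C).
clearbody s1 s2 s3 => s123 e23 e31.
have [x0 y0 z0] := same_sign_neq0 sxyz.
have [xy yz _] := same_sign_mul_gt0 sxyz.
have [_ s2n _] := same_sign_neq0 s123.
have [_ s23 s31] := same_sign_mul_gt0 s123.
(* Equal distances to the sides make s2 : s3 : s1 = x : y : z up to sign, and the
   sign hypotheses leave only the positive ratio. *)
have r23 : s2 * y = s3 * x.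
  apply: eq_sqr_mul_gt0; first by rewrite mulrACA mulr_gt0 // mulrC.
  by apply: (eq_lincomb (t := l * x ^+ 2 * y ^+ 2) e23); field; rewrite x0 y0 l0.
have r31 : s3 * z = s1 * y.
  apply: eq_sqr_mul_gt0; first by rewrite mulrACA mulr_gt0 // mulrC.
  by apply: (eq_lincomb (t := l * y ^+ 2 * z ^+ 2) e31); field; rewrite y0 z0 l0.
have es3 : s3 = s2 * y / x by rewrite r23 mulfK.
have es1 : s1 = s2 * z / x by apply: (mulIf y0); rewrite -r31 es3; field.
rewrite es1 es3 /cscale /wsum => -[b1 b2].
congr (_, _).
- by apply: (eq_lincomb (t := x / s2) b1); field; rewrite x0 s2n.
- by apply: (eq_lincomb (t := x / s2) b2); field; rewrite x0 s2n.
Qed.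

Lemma same_sign_flip (a b c : point R) :
  cross a b != 0 -> cross b c != 0 -> cross c a != 0 ->
  exists b' c', [/\ b' = b \/ b' = (- b)%C, c' = c \/ c' = (- c)%C &
                    same_sign (cross a b') (cross b' c') (cross c' a)].
Proof.
rewrite !neq_lt => /orP[ab|ab] /orP[bc|bc] /orP[ca|ca].
all: (exists b + exists (- b)%C); (exists c + exists (- c)%C);
  split; [by [left | right] | by [left | right] |
          rewrite ?crossNl ?crossNr ?opprK; by [left; lra | right; lra]].
Qed.

End Plane.

Section UnitCircle.
Variable R : realType.
Implicit Types (p u : point R).

(* [sqphase p = p / conj p]: a rational parametrisation of the unit circle. *)
Definition sqphase p : point R := ((dot p p)^-1 *: (p * p))%C.

Lemma sqphase_surj u : dot u u = 1 -> exists p, dot p p != 0 /\ sqphase p = u.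
Proof.
case: u => u1 u2; rewrite /dot /= => hu.
have [u1N|u1N] := eqVneq u1 (-1).
  have u2_0 : u2 = 0 by apply/eqP; rewrite -sqrf_eq0 expr2; apply/eqP; nra.
  exists (0, 1); rewrite /sqphase /dot /cscale /cmul /= u1N u2_0.
  by split; [rewrite mul0r add0r mulr1 oner_eq0 | congr (_, _); field].
have u1N' : 1 + u1 != 0 by apply: contra_neq u1N => ?; lra.
have hN : (1 + u1) * (1 + u1) + u2 * u2 = 2 * (1 + u1).
  by apply: (eq_lincomb (t := 1) hu); ring.
(* On the unit circle (1 + u) / (1 + conj u) = u. *)
exists (1 + u1, u2); rewrite /sqphase /dot /cscale /cmul /= hN.
split; first by rewrite mulf_neq0 ?pnatr_eq0.
congr (_, _); last by field.
by apply: (eq_lincomb (t := - (2 * (1 + u1))^-1) hu); field.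
Qed.

Lemma sqphase_sqr_surj u : dot u u = 1 ->
  exists p, dot p p != 0 /\ (sqphase p * sqphase p)%C = u.
Proof.
move=> hu; have [p0 [np0 <-]] := sqphase_surj hu.
have p0_gt0 : 0 < dot p0 p0 by rewrite lt_neqAle eq_sym np0 /dot addr_ge0 // -expr2 sqr_ge0.
pose s := Num.sqrt (dot p0 p0).
have s0 : s != 0 by rewrite gt_eqF // sqrtr_gt0.
have s2 : s ^+ 2 = dot p0 p0 by rewrite sqr_sqrtr // ltW.
have [p [np ep]] : exists p, dot p p != 0 /\ sqphase p = (s^-1 *: p0)%C.
  apply: sqphase_surj; apply: (eq_lincomb (t := - s ^- 2) s2).
  by rewrite /dot /cscale /=; field.
by exists p; split => //; rewrite ep /sqphase -s2 /cmul /cscale /=; congr (_, _); field.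
Qed.

Lemma sqphase_rot p : sqphase (- p.2, p.1) = (- sqphase p)%C.
Proof.
rewrite /sqphase /dot /cmul /cscale /copp /=.
have -> : - p.2 * - p.2 + p.1 * p.1 = p.1 * p.1 + p.2 * p.2 by ring.
by congr (_, _); ring.
Qed.

Lemma cross_sqphase p q : dot p p != 0 -> dot q q != 0 ->
  cross (sqphase p) (sqphase q) = 2 * dot p q * cross p q / (dot p p * dot q q).
Proof.
move=> np nq; cbv beta iota delta [sqphase cscale cmul cross dot fst snd].
by field; rewrite -/(dot p p) -/(dot q q) np nq.
Qed.

Lemma cross_sqphase_neq0 p q : dot p p != 0 -> dot q q != 0 ->
  cross (sqphase p) (sqphase q) != 0 -> dot p q != 0 /\ cross p q != 0.
Proof.
move=> np nq; rewrite cross_sqphase // !mulf_eq0 !invr_eq0 !negb_or.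
by case/andP=> /andP[/andP[_ ->] ->].
Qed.

Lemma cross_sqphase_sum p q r : dot p p != 0 -> dot q q != 0 -> dot r r != 0 ->
  cross (sqphase r) (sqphase p) + cross (sqphase p) (sqphase q) - cross (sqphase q) (sqphase r) =
  - 4 * dot r p * dot p q * cross q r / (dot p p * dot q q * dot r r).
Proof.
move=> np nq nr; cbv beta iota delta [sqphase cscale cmul cross dot fst snd].
by field; rewrite -/(dot p p) -/(dot q q) -/(dot r r) np nq nr.
Qed.

End UnitCircle.

Section Frame.
Variables (R : realType) (O : point R) (k : R).
Implicit Types (a b c p q r z : point R).

Definition frame_point z : point R := (O + k *: z)%C.

(* Complex coordinates, in the frame where the circumcircle is the unit circle and
   A, B, C are a^2, b^2, c^2, of the points I, H, H_A, O_a, O_A of the statement. *)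
Definition zI a b c : point R := (- (a * b + b * c + c * a))%C.
Definition zH a b c : point R := (a * a + b * b + c * c)%C.
Definition zHA a b c : point R := (b * b + c * c + b * c - c * a - a * b)%C.
Definition zOa a b c : point R := (b * b + c * c + b * c)%C.
Definition zOA a b c : point R := (a * a - a * b - c * a - b * c - b * c)%C.

Local Ltac unfold_frame := cbv beta iota delta [frame_point zI zH zHA zOa zOA sqphase
  is_orthocenter is_circumcenter point_reflection midpoint noncollinear sqdist wsum
  cadd copp cmul cscale vsub dot cross fst snd].

Lemma zI_cycle a b c : zI b c a = zI a b c.
Proof. by unfold_frame; congr (_, _); ring. Qed.

Lemma zH_cycle a b c : zH b c a = zH a b c.
Proof. by unfold_frame; congr (_, _); ring. Qed.

Lemma zOA_reflection a b c :
  frame_point (zOA a b c) =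
  point_reflection (midpoint (frame_point (zH a b c)) (frame_point (zI a b c)))
    (frame_point (zOa a b c)).
Proof. by unfold_frame; congr (_, _); field. Qed.

Lemma sqdist_frame_sqphase p q : dot p p != 0 -> dot q q != 0 ->
  sqdist (frame_point (sqphase p * sqphase p)%C) (frame_point (sqphase q * sqphase q)%C) =
  (2 * k) ^+ 2 * cross (sqphase p) (sqphase q) ^+ 2.
Proof. by move=> np nq; unfold_frame; field; rewrite -/(dot p p) -/(dot q q) np nq. Qed.

Lemma frame_point_neq_cross p q : dot p p != 0 -> dot q q != 0 ->
  frame_point (sqphase p * sqphase p)%C <> frame_point (sqphase q * sqphase q)%C ->
  cross (sqphase p) (sqphase q) != 0.
Proof.
move=> np nq neq; apply/eqP => e; apply/neq/sqdist_eq0.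
by rewrite sqdist_frame_sqphase // e expr0n mulr0.
Qed.

Section Identities.
Variables p q r : point R.
Hypotheses (np : dot p p != 0) (nq : dot q q != 0) (nr : dot r r != 0).
Local Notation a := (sqphase p).
Local Notation b := (sqphase q).
Local Notation c := (sqphase r).
Local Notation A := (frame_point (a * a)%C).
Local Notation B := (frame_point (b * b)%C).
Local Notation C := (frame_point (c * c)%C).

Local Ltac field_frame := field; rewrite -?/(dot p p) -?/(dot q q) -?/(dot r r) ?np ?nq ?nr.

Lemma zH_orthocenter : is_orthocenter (frame_point (zH a b c)) A B C.
Proof. by unfold_frame; split; [|split]; field_frame. Qed.

Lemma zHA_orthocenter : is_orthocenter (frame_point (zHA a b c)) B (frame_point (zI a b c)) C.
Proof. by unfold_frame; split; [|split]; field_frame. Qed.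

Lemma zOa_circumcenter : is_circumcenter (frame_point (zOa a b c)) (frame_point (zHA a b c)) B C.
Proof. by unfold_frame; split; field_frame. Qed.

Lemma zOA_circumcenter :
  is_circumcenter (frame_point (zOA a b c)) A (frame_point (zHA b c a)) (frame_point (zHA c a b)).
Proof. by unfold_frame; split; field_frame. Qed.

Lemma zI_barycentric :
  ((cross b c + cross c a + cross a b) *: frame_point (zI a b c))%C =
  wsum (cross b c) (cross c a) (cross a b) A B C.
Proof. by unfold_frame; congr (_, _); field_frame. Qed.

Lemma noncollinear_zHA_cross :
  cross (vsub B (frame_point (zHA a b c))) (vsub C (frame_point (zHA a b c))) =
  - k ^+ 2 * dot (b + c)%C (b + c)%C * (cross a b + cross b c + cross c a).
Proof. by unfold_frame; field_frame. Qed.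

Lemma noncollinear_zHBC_cross :
  cross (vsub (frame_point (zHA b c a)) A) (vsub (frame_point (zHA c a b)) A) =
  - k ^+ 2 * dot (c - b)%C (c - b)%C * (cross c a + cross a b - cross b c).
Proof. by unfold_frame; field_frame. Qed.

End Identities.

Section Reflection.
Variables p q r : point R.
Hypotheses (np : dot p p != 0) (nq : dot q q != 0) (nr : dot r r != 0) (k0 : k != 0).
Local Notation a := (sqphase p).
Local Notation b := (sqphase q).
Local Notation c := (sqphase r).
Local Notation A := (frame_point (a * a)%C).
Local Notation B := (frame_point (b * b)%C).
Local Notation C := (frame_point (c * c)%C).
(* This selects the signs of a, b, c for which -(ab + bc + ca) is the incenter
   rather than one of the excenters. *)
Hypothesis signs : same_sign (cross a b) (cross b c) (cross c a).

Lemma noncollinear_zHA : noncollinear (frame_point (zHA a b c)) B C.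
Proof.
have [_ nbc _] := same_sign_neq0 signs.
rewrite /noncollinear noncollinear_zHA_cross // !mulf_neq0 ?oppr_eq0 ?expf_neq0 //.
  exact: cross_neq0_add.
exact: same_sign_sum_neq0.
Qed.

Lemma noncollinear_zHBC : noncollinear A (frame_point (zHA b c a)) (frame_point (zHA c a b)).
Proof.
have [nab nbc nca] := same_sign_neq0 signs.
have [dpq _] := cross_sqphase_neq0 np nq nab.
have [_ cqr] := cross_sqphase_neq0 nq nr nbc.
have [drp _] := cross_sqphase_neq0 nr np nca.
rewrite /noncollinear noncollinear_zHBC_cross // !mulf_neq0 ?oppr_eq0 ?expf_neq0 //.
  exact: cross_neq0_sub.
by rewrite cross_sqphase_sum // !(mulf_neq0, invr_eq0) // oppr_eq0 pnatr_eq0.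
Qed.

Lemma zI_incenter I : is_incenter I A B C -> I = frame_point (zI a b c).
Proof.
move=> HI; have signs' := same_sign_cycle signs.
have l0 : (2 * k) ^+ 2 != 0 by rewrite expf_neq0 // mulf_neq0 ?pnatr_eq0.
apply: (cscale_inj (same_sign_sum_neq0 signs')); rewrite zI_barycentric //.
exact: (incenter_weights l0 signs' (sqdist_frame_sqphase nq nr)
  (sqdist_frame_sqphase nr np) (sqdist_frame_sqphase np nq) HI).
Qed.

Lemma antifuhrmann_reflection_frame I H HA HB HC Oa OA :
  I = frame_point (zI a b c) -> H = frame_point (zH a b c) ->
  noncollinear B I C -> noncollinear C I A -> noncollinear A I B ->
  is_orthocenter HA B I C -> is_orthocenter HB C I A -> is_orthocenter HC A I B ->
  is_circumcenter Oa HA B C -> is_circumcenter OA A HB HC ->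
  OA = point_reflection (midpoint H I) Oa.
Proof.
move=> -> -> nBIC nCIA nAIB HHA HHB HHC HOa HOA.
have eHA := orthocenter_uniq nBIC HHA (zHA_orthocenter np nq nr).
have eHB : HB = frame_point (zHA b c a).
  by apply: (orthocenter_uniq nCIA HHB); rewrite -(zI_cycle a); exact: zHA_orthocenter.
have eHC : HC = frame_point (zHA c a b).
  by apply: (orthocenter_uniq nAIB HHC); rewrite (zI_cycle c); exact: zHA_orthocenter.
subst HA HB HC.
have -> := circumcenter_uniq noncollinear_zHA HOa (zOa_circumcenter np nq nr).
have -> := circumcenter_uniq noncollinear_zHBC HOA (zOA_circumcenter np nq nr).
exact: zOA_reflection.
Qed.

End Reflection.
End Frame.

Section NormalForm.
Variable R : realType.
Implicit Types (k : R) (p q v X A B C O : point R).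

Lemma frame_point_sqphase O k X : k != 0 -> sqdist O X = k ^+ 2 ->
  exists p, dot p p != 0 /\ X = frame_point O k (sqphase p * sqphase p)%C.
Proof.
move=> k0 eX.
have [p [np ep]] : exists p, dot p p != 0 /\ (sqphase p * sqphase p)%C = (k^-1 *: (X - O))%C.
  apply: sqphase_sqr_surj; apply: (eq_lincomb (t := k ^- 2) eX).
  by cbv beta iota delta [sqdist dot cscale vsub fst snd]; field.
exists p; split => //; rewrite ep.
by case: X {eX ep} => x1 x2; cbv beta iota delta [frame_point cadd cscale vsub fst snd];
  congr (_, _); field.
Qed.

Lemma circumcircle_radius A B C : noncollinear A B C ->
  exists O k, k != 0 /\ [/\ sqdist O A = k ^+ 2, sqdist O B = k ^+ 2 & sqdist O C = k ^+ 2].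
Proof.
move=> nABC; have [O [eAB eBC]] := circumcenter_exists nABC.
have rho0 : sqdist O A != 0.
  apply/eqP => rho0; apply: (noncollinear_neq nABC).
  by rewrite -(sqdist_eq0 rho0); apply: sqdist_eq0; rewrite -eAB.
have rho_gt0 : 0 < sqdist O A.
  by rewrite lt_neqAle eq_sym rho0 /sqdist /dot addr_ge0 // -expr2 sqr_ge0.
exists O, (Num.sqrt (sqdist O A)); split; first by rewrite gt_eqF // sqrtr_gt0.
by rewrite sqr_sqrtr ?ltW // -eAB -eBC.
Qed.

Lemma sqphase_flip q v : dot q q != 0 -> v = sqphase q \/ v = (- sqphase q)%C ->
  exists q', dot q' q' != 0 /\ sqphase q' = v.
Proof.
move=> nq [->|->]; first by exists q.
exists (- q.2, q.1); rewrite sqphase_rot; split=> //.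
suff -> : dot (- q.2, q.1) (- q.2, q.1) = dot q q by [].
by cbv beta iota delta [dot fst snd]; ring.
Qed.

Lemma triangle_frame A B C : noncollinear A B C ->
  exists O k p q r, [/\ k != 0, dot p p != 0, dot q q != 0 & dot r r != 0] /\
    [/\ A = frame_point O k (sqphase p * sqphase p)%C,
        B = frame_point O k (sqphase q * sqphase q)%C,
        C = frame_point O k (sqphase r * sqphase r)%C &
        same_sign (cross (sqphase p) (sqphase q)) (cross (sqphase q) (sqphase r))
                  (cross (sqphase r) (sqphase p))].
Proof.
move=> nABC; have [O [k [k0 [eA eB eC]]]] := circumcircle_radius nABC.
have [p [np eAp]] := frame_point_sqphase k0 eA.
have [q0 [nq0 eBq]] := frame_point_sqphase k0 eB.
have [r0 [nr0 eCr]] := frame_point_sqphase k0 eC.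
subst A B C.
have nBCA := noncollinear_cycle nABC.
have nab := frame_point_neq_cross np nq0 (noncollinear_neq nABC).
have nbc := frame_point_neq_cross nq0 nr0 (noncollinear_neq nBCA).
have nca := frame_point_neq_cross nr0 np (noncollinear_neq (noncollinear_cycle nBCA)).
have [b [c [eb ec signs]]] := same_sign_flip nab nbc nca.
have [q [nq eq]] := sqphase_flip nq0 eb.
have [r [nr er]] := sqphase_flip nr0 ec.
subst b c; exists O, k, p, q, r; split; first by [].
by split=> //; [case: eb | case: ec] => ->; rewrite ?cmulNN.
Qed.

End NormalForm.

Unset Implicit Arguments.
Set Strict Implicit.

Theorem theorem5p2 (R : realType) (A B C I H HA HB HC Oa Ob Oc OA OB OC : point R) :
  noncollinear A B C ->
  is_incenter I A B C ->
  is_orthocenter H A B C ->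
  is_orthocenter HA B I C ->
  is_orthocenter HB C I A ->
  is_orthocenter HC A I B ->
  is_circumcenter Oa HA B C ->
  is_circumcenter Ob HB C A ->
  is_circumcenter Oc HC B A ->
  is_circumcenter OA A HB HC ->
  is_circumcenter OB B HC HA ->
  is_circumcenter OC C HA HB ->
  OA = point_reflection (midpoint H I) Oa /\
  OB = point_reflection (midpoint H I) Ob /\
  OC = point_reflection (midpoint H I) Oc.
Proof.
move=> nABC HI HH HHA HHB HHC HOa HOb HOc HOA HOB HOC.
have [O [k [p [q [r [[k0 np nq nr] [eA eB eC signs]]]]]]] := triangle_frame nABC.
subst A B C.
have eI := zI_incenter np nq nr k0 signs HI.
have eH := orthocenter_uniq nABC HH (zH_orthocenter O k np nq nr).
have [nBIC nCIA nAIB] := inside_noncollinear (proj1 HI).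
have signs' := same_sign_cycle signs.
split; [|split].
- exact: (antifuhrmann_reflection_frame np nq nr k0 signs eI eH nBIC nCIA nAIB
    HHA HHB HHC HOa HOA).
- apply: (antifuhrmann_reflection_frame nq nr np k0 signs' _ _ nCIA nAIB nBIC
    HHB HHC HHA HOb HOB).
  + by rewrite eI -zI_cycle.
  + by rewrite eH -zH_cycle.
- apply: (antifuhrmann_reflection_frame nr np nq k0 (same_sign_cycle signs') _ _ nAIB nBIC nCIA
    HHC HHA HHB (is_circumcenter_swap HOc) HOC).
  + by rewrite eI zI_cycle.
  + by rewrite eH zH_cycle.
Qed.
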